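(* For every fixed $d>1$ there exists $L>0$ such that, with $p=d/n$, a.a.s. every set $S\subseteq V_n$ inducing a connected subgraph of $G_{n,p}$ with $|S|\ge\ln n$ satisfies $d(S)\le L|S|$.
   Context: $G_{n,p}$ is the random graph on $V_n=\{1,\dots,n\}$ with each possible edge present independently with probability $p$; a.a.s. means with probability tending to $1$; $d(S)=\sum_{v\in S}d(v)$ is the sum of the degrees in $G_{n,p}$ of the vertices of $S$. *)

From HB Require Import structures.
From mathcomp Require Import all_boot all_order all_algebra.
From mathcomp Require Import reals exp.
Set Implicit Arguments. Unset Strict Implicit. Unset Printing Implicit Defensive.
Import Order.TTheory GRing.Theory Num.Theory.
Local Open Scope ring_scope.

(* A graph on V_n = 'I_n is encoded by its edge set: a set of pairs (i,j)
   with i < j.  [gpairs n] is the set of all possible edges. *)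
Definition gpairs (n : nat) : {set 'I_n * 'I_n} :=
  [set ij : 'I_n * 'I_n | (nat_of_ord ij.1 < nat_of_ord ij.2)%N].

Definition gadj (n : nat) (G : {set 'I_n * 'I_n}) : rel 'I_n :=
  fun u v => ((u, v) \in G) || ((v, u) \in G).

Definition gdeg (n : nat) (G : {set 'I_n * 'I_n}) (v : 'I_n) : nat :=
  #|[set u | gadj G v u]|.

Definition gdegsum (n : nat) (G : {set 'I_n * 'I_n}) (S : {set 'I_n}) : nat :=
  (\sum_(v in S) gdeg G v)%N.

Definition induces_connected (n : nat) (G : {set 'I_n * 'I_n}) (S : {set 'I_n}) : bool :=
  (S != set0) &&
  [forall u in S, forall v in S,
     connect [rel x y | [&& x \in S, y \in S & gadj G x y]] u v].

(* Probability of an event E in G_{n,p}: each of the C(n,2) possible edges is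
   present independently with probability p. *)
Definition Gnp_prob (R : realType) (n : nat) (p : R)
    (E : pred {set 'I_n * 'I_n}) : R :=
  \sum_(G : {set 'I_n * 'I_n} | (G \subset gpairs n) && E G)
     p ^+ #|G| * (1 - p) ^+ (#|gpairs n| - #|G|).

From HB Require Import structures.
From mathcomp Require Import all_boot all_order all_algebra.
From mathcomp Require Import reals sequences exp.
From mathcomp Require Import zify ring lra.

(* If a connected S with |S| >= ln n had d(S) > 2 (c + 1) |S|, more
   than (c + 1) |S| edges of G would touch S, so G would contain a spanning tree
   of S together with c |S| further edges touching S.  A union bound over S, a
   root, a parent map of the tree and the extra edges bounds the probability of
   this by the sum over k >= ln n of
     'C(n, k) k^k 'C(2 k n, c k) p^(k - 1 + c k) <= n q^k,
   where q = e d (2 e d / c)^c.  Taking c so large that q e^3 <= 1 and using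
   n <= e^k, every term is at most n^-2, and there are only n + 1 terms. *)

Set Implicit Arguments. Unset Strict Implicit. Unset Printing Implicit Defensive.
Import Order.TTheory GRing.Theory Num.Theory.
Local Open Scope ring_scope.

Section SubsetSums.
Variable R : nzSemiRingType.

Lemma sum_subsets_card (T : finType) (U : {set T}) (F : nat -> R) :
  \sum_(H : {set T} | H \subset U) F #|H| = \sum_(k < #|U|.+1) F k *+ 'C(#|U|, k).
Proof.
rewrite (partition_big (fun H : {set T} => (inord #|H| : 'I_#|U|.+1)) predT) //=.
apply: eq_bigr => k _.
have -> : \sum_(H : {set T} | (H \subset U) && (inord #|H| == k)) F #|H|
        = \sum_(H in [set A : {set T} | A \subset U & #|A| == k]) F k.
  apply: eq_big => H; last by case/andP => HU /eqP <-; rewrite inordK // ltnS subset_leq_card.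
  rewrite inE; case HU: (H \subset U) => //=.
  by rewrite -val_eqE /= inordK // ltnS subset_leq_card.
by rewrite sumr_const cards_draws.
Qed.

End SubsetSums.

Lemma sum_subsets_binom (R : comNzSemiRingType) (T : finType) (U : {set T}) (x y : R) :
  \sum_(H : {set T} | H \subset U) x ^+ #|H| * y ^+ (#|U| - #|H|) = (x + y) ^+ #|U|.
Proof.
rewrite (sum_subsets_card U (fun k => x ^+ k * y ^+ (#|U| - k))) addrC exprDn.
by apply: eq_bigr => i _; rewrite mulrC.
Qed.

Section Gnp.
Variables (R : realType) (n : nat) (p : R).
Hypotheses (p_ge0 : 0 <= p) (p_le1 : p <= 1).
Implicit Types (G W : {set 'I_n * 'I_n}) (E : pred {set 'I_n * 'I_n}).

Local Notation weight G := (p ^+ #|G| * (1 - p) ^+ (#|gpairs n| - #|G|)).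

Lemma weight_ge0 G : 0 <= weight G.
Proof. by rewrite mulr_ge0 // exprn_ge0 // subr_ge0. Qed.

Lemma Gnp_probT : Gnp_prob p (fun _ : {set 'I_n * 'I_n} => true) = 1.
Proof.
rewrite /Gnp_prob; under eq_bigl => G do rewrite andbT.
by rewrite sum_subsets_binom addrC subrK expr1n.
Qed.

Lemma Gnp_probC E : Gnp_prob p E = 1 - Gnp_prob p (predC E).
Proof.
rewrite -Gnp_probT /Gnp_prob [X in _ = X - _](bigID E) /=.
rewrite [X in _ = X + _ - _](eq_bigl (fun G => (G \subset gpairs n) && E G));
  last by move=> G; rewrite andbT.
rewrite [X in _ = _ + X - _](eq_bigl (fun G => (G \subset gpairs n) && ~~ E G));
  last by move=> G; rewrite andbT.
by rewrite addrK.
Qed.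

Lemma Gnp_probE E :
  Gnp_prob p E = \sum_(G : {set 'I_n * 'I_n} | G \subset gpairs n) (E G)%:R * weight G.
Proof.
rewrite /Gnp_prob big_mkcondr /=; apply: eq_bigr => G _.
by case: (E G); rewrite ?mul1r ?mul0r.
Qed.

(* The graphs containing W are the sets W :|: H with H a graph avoiding W. *)
Lemma Gnp_prob_supset W : W \subset gpairs n ->
  Gnp_prob p (fun G : {set 'I_n * 'I_n} => W \subset G) = p ^+ #|W|.
Proof.
move=> Wg; rewrite /Gnp_prob.
rewrite (reindex_onto (fun H : {set 'I_n * 'I_n} => W :|: H) (fun G => G :\: W)) /=; last first.
  by move=> G /andP[_ WG]; rewrite setDE setUIr setUCr setIT; apply/setUidPr.
rewrite (eq_bigl (fun H : {set 'I_n * 'I_n} => H \subset gpairs n :\: W)); last first.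
  move=> H; apply/idP/idP.
    case/andP => /andP[/subUsetP[_ Hg] _] /eqP <-.
    by rewrite setDUl setDv set0U setSD.
  move=> HgW; have HW : [disjoint H & W].
    by rewrite disjoints_subset (subset_trans HgW) // setDE subsetIr.
  rewrite subsetUl andbT subUset Wg (subset_trans HgW (subsetDl _ _)) /=.
  by rewrite setDUl setDv set0U; apply/eqP/setDidPl.
have total : (p + (1 - p)) ^+ #|gpairs n :\: W| = 1 by rewrite addrC subrK expr1n.
rewrite -[RHS]mulr1 -[X in _ = _ * X]total -sum_subsets_binom mulr_sumr.
apply: eq_bigr => H HgW.
have HW : [disjoint W & H].
  by rewrite disjoint_sym disjoints_subset (subset_trans HgW) // setDE subsetIr.
rewrite cardsU (disjoint_setI0 HW) cards0 subn0 cardsD (setIidPr Wg).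
by rewrite exprD subnDA mulrA.
Qed.

Lemma Gnp_prob_union_bound (I : finType) (P : pred I) (W : I -> {set 'I_n * 'I_n}) E :
  (forall G, G \subset gpairs n -> E G -> exists2 i, P i & W i \subset G) ->
  Gnp_prob p E <= \sum_(i | P i) Gnp_prob p (fun G : {set 'I_n * 'I_n} => W i \subset G).
Proof.
move=> EW; rewrite Gnp_probE.
under [X in _ <= X]eq_bigr => i _ do rewrite Gnp_probE.
rewrite exchange_big /=; apply: ler_sum => G Gg.
have sum_ge0 (Q : pred I) :
    0 <= \sum_(j | Q j) ((W j \subset G)%:R * weight G).
  by apply: sumr_ge0 => j _; rewrite mulr_ge0 ?ler0n ?weight_ge0.
case EG: (E G); last by rewrite mul0r.
have [i Pi WiG] := EW G Gg EG.
by rewrite (bigD1 i) //= WiG mul1r lerDl.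
Qed.

End Gnp.

Section SpanningTrees.
Variable n : nat.
Implicit Types (G : {set 'I_n * 'I_n}) (S X : {set 'I_n}).

Definition edge (u v : 'I_n) : 'I_n * 'I_n := if (u < v)%N then (u, v) else (v, u).

Lemma edge_eq_mem (u v a b : 'I_n) : edge u v = edge a b -> (a == u) || (a == v).
Proof.
by rewrite /edge; case: ifP => _; case: ifP => _ [] -> ->; rewrite eqxx ?orbT.
Qed.

Lemma gadj_sym G : symmetric (gadj G).
Proof. by move=> u v; rewrite /gadj orbC. Qed.

Lemma edge_in G (u v : 'I_n) : G \subset gpairs n -> gadj G u v -> edge u v \in G.
Proof.
move=> /subsetP Gg; rewrite /gadj /edge; case/orP => uv.
  by move: (Gg _ uv); rewrite inE /= => ->.
by move: (Gg _ uv); rewrite inE /= => lt_vu; rewrite ltnNge (ltnW lt_vu).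
Qed.

Lemma connect_exit (e : rel 'I_n) X (a b : 'I_n) :
  connect e a b -> a \in X -> b \notin X -> exists x y, [/\ x \in X, y \notin X & e x y].
Proof.
case/connectP => s; elim: s a => [|c s IHs] a /=; first by move=> _ -> ->.
case/andP => eac ps b_last aX bX.
case cX: (c \in X); first exact: IHs ps b_last cX bX.
by exists a, c; rewrite cX.
Qed.

(* f is the parent map of a spanning tree of X rooted at r: every vertex
   but the root is joined to its parent, and distinct vertices give distinct
   edges; f is normalised to r outside X :\ r. *)
Definition parent_tree G (r : 'I_n) X (f : {ffun 'I_n -> 'I_n}) :=
  [/\ r \in X, (forall v, v \notin X :\ r -> f v = r),
      (forall v, v \in X :\ r -> f v \in X /\ gadj G v (f v)) &
      {in X :\ r &, injective (fun v => edge v (f v))}].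

Lemma parent_tree1 G (r : 'I_n) : parent_tree G r [set r] [ffun => r].
Proof.
split; first by rewrite set11.
- by move=> v _; rewrite ffunE.
- by move=> v; rewrite setDv inE.
- by move=> v; rewrite setDv inE.
Qed.

Lemma parent_treeU1 G (r x y : 'I_n) X (f : {ffun 'I_n -> 'I_n}) :
  parent_tree G r X f -> x \in X -> y \notin X -> gadj G x y ->
  parent_tree G r (y |: X) [ffun v => if v == y then x else f v].
Proof.
move=> [rX f_out f_in f_inj] xX yX adj_xy.
have yr : y != r by apply: contraNneq yX => ->.
have old_vertex v : v \in (y |: X) :\ r -> v != y -> v \in X :\ r.
  by rewrite !inE => /andP[-> /orP[->|->]].
have new_edge v : v \in X :\ r -> edge v (f v) != edge y x.
  move=> vX; apply/negP => /eqP /edge_eq_mem /orP [] /eqP y_eq.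
    by move: vX yX; rewrite inE y_eq => /andP[_ ->].
  by case: (f_in v vX) yX => fX _; rewrite y_eq fX.
split.
- by rewrite in_setU1 rX orbT.
- move=> v; rewrite ffunE; case: ifP => [/eqP -> | vy]; first by rewrite !inE eqxx yr.
  by move=> vXr; apply: f_out; apply: contra vXr; rewrite !inE => /andP [-> ->]; rewrite orbT.
- move=> v vXr; rewrite ffunE; case: ifP => [/eqP -> | vy].
    by rewrite !inE xX orbT gadj_sym.
  by case: (f_in v (old_vertex v vXr (negbT vy))) => fX adj; rewrite in_setU1 fX orbT adj.
move=> v w vXr wXr /=; rewrite !ffunE.
case: ifP => [/eqP -> | vy]; case: ifP => [/eqP -> | wy] //.
- by move=> e_eq; move: (new_edge w (old_vertex w wXr (negbT wy))); rewrite e_eq eqxx.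
- by move=> e_eq; move: (new_edge v (old_vertex v vXr (negbT vy))); rewrite e_eq eqxx.
by apply: f_inj; apply: old_vertex; rewrite ?vy ?wy.
Qed.

Lemma exists_parent_tree G S (r : 'I_n) : induces_connected G S -> r \in S ->
  exists f, parent_tree G r S f.
Proof.
case/andP => _ /forallP S_conn rS.
suff grow m : (m < #|S|)%N -> exists X f, [/\ X \subset S, #|X| = m.+1 & parent_tree G r X f].
  have S_gt0 : (0 < #|S|)%N by apply/card_gt0P; exists r.
  have [|X [f [XS cardX treeX]]] := grow #|S|.-1; first by rewrite prednK.
  have XS_eq : X = S by apply/eqP; rewrite eqEcard XS cardX prednK ?leqnn.
  by exists f; rewrite -XS_eq.
elim: m => [|m IHm] lt_mS.
  by exists [set r], [ffun => r]; rewrite sub1set rS cards1; split; last exact: parent_tree1.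
have [X [f [XS cardX treeX]]] := IHm (ltnW lt_mS).
have /subsetPn [z zS zX] : ~~ (S \subset X).
  by apply: contraTN lt_mS => /subset_leq_card; rewrite cardX ltnNge => ->.
have rX : r \in X by case: treeX.
have := S_conn r; rewrite rS /= => /forallP /(_ z); rewrite zS /= => rz.
have [x [y [xX yX /and3P [_ yS adj_xy]]]] := connect_exit rz rX zX.
exists (y |: X), [ffun v => if v == y then x else f v]; split.
- by rewrite subUset sub1set yS XS.
- by rewrite cardsU1 yX cardX.
- exact: parent_treeU1.
Qed.

End SpanningTrees.

Section DegreeSums.
Variable n : nat.
Implicit Types (G : {set 'I_n * 'I_n}) (S : {set 'I_n}).

Definition touch S := [set e in gpairs n | (e.1 \in S) || (e.2 \in S)].

Definition tree_edges S (r : 'I_n) (f : {ffun 'I_n -> 'I_n}) :=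
  [set edge v (f v) | v in S :\ r].

Lemma card_set_sum (T : finType) (P : pred T) : #|[set x | P x]| = (\sum_x P x)%N.
Proof. by rewrite -sum1dep_card big_mkcond /=; apply: eq_bigr => x _; case: (P x). Qed.

Lemma sum_incident_le G S (g : 'I_n -> 'I_n -> 'I_n * 'I_n) :
  G \subset gpairs n -> (forall u v, ((g u v).1 == u) || ((g u v).2 == u)) ->
  injective (fun uv : 'I_n * 'I_n => g uv.1 uv.2) ->
  (\sum_(v in S) \sum_u (g v u \in G) <= #|G :&: touch S|)%N.
Proof.
move=> /subsetP Gg g_end g_inj.
rewrite big_mkcond /= (eq_bigr (fun v => \sum_u ((v \in S) && (g v u \in G) : nat))); last first.
  by move=> v _; case: (v \in S) => //; rewrite big1.
rewrite pair_big /= card_set_sum [X in (_ <= X)%N](reindex_inj g_inj) /=.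
apply: leq_sum => [[v u]] _ /=.
case vS: (v \in S) => //=; case gG: (g v u \in G) => //=.
by rewrite /touch in_set Gg //=; case/orP: (g_end v u) => /eqP ->; rewrite vS ?orbT.
Qed.

Lemma gdegsum_le_touch G S : G \subset gpairs n ->
  (gdegsum G S <= 2 * #|G :&: touch S|)%N.
Proof.
move=> Gg; rewrite /gdegsum mul2n -addnn.
apply: (@leq_trans (\sum_(v in S) \sum_u ((v, u) \in G) +
                    \sum_(v in S) \sum_u ((u, v) \in G))%N).
  rewrite -big_split /=; apply: leq_sum => v _.
  rewrite /gdeg card_set_sum -big_split /=; apply: leq_sum => u _.
  by rewrite /gadj; case: ((v, u) \in G); case: ((u, v) \in G).
apply: leq_add; [apply: (@sum_incident_le G S (fun v u => (v, u))) |
                 apply: (@sum_incident_le G S (fun v u => (u, v)))] => //.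
- by move=> u v; rewrite eqxx.
- by move=> [a b] [c d].
- by move=> u v; rewrite eqxx orbT.
- by move=> [a b] [c d] /= [-> ->].
Qed.

(* A connected S of large degree sum carries a spanning tree together with
   c |S| further edges touching S: at least (c + 1) |S| edges of G touch S,
   of which only |S| - 1 are tree edges. *)
Lemma heavy_connected_witness G S (c : nat) :
  G \subset gpairs n -> induces_connected G S ->
  (2 * (c.+1 * #|S|) < gdegsum G S)%N ->
  exists r (f : {ffun 'I_n -> 'I_n}) (M : {set 'I_n * 'I_n}),
    [/\ r \in S, f \in pffun_on r (S :\ r) S, M \subset touch S,
        #|M| = (c * #|S|)%N &
        (tree_edges S r f :|: M \subset G) &&
        (#|tree_edges S r f :|: M| == #|S|.-1 + c * #|S|)%N].
Proof.
move=> Gg S_conn heavy.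
have [r rS] : exists r, r \in S by apply/set0Pn; case/andP: S_conn.
have S_gt0 : (0 < #|S|)%N by apply/card_gt0P; exists r.
have [f [_ f_out f_in f_inj]] := exists_parent_tree S_conn rS.
set T := tree_edges S r f.
have TG : T \subset G :&: touch S.
  apply/subsetP => e /imsetP [v vSr ->]; have [fS adj] := f_in v vSr.
  rewrite in_setI edge_in // /touch in_set (subsetP Gg) ?edge_in //=.
  move: vSr; rewrite in_setD1 => /andP[_ vS].
  by rewrite /edge; case: ifP => _ /=; rewrite ?vS ?fS ?orbT.
have cardT : #|T| = #|S|.-1 by rewrite card_in_imset // [#|S|](cardsD1 r) rS.
set A := (G :&: touch S) :\: T.
have cardA : (c * #|S| <= #|A|)%N.
  have := leq_trans heavy (gdegsum_le_touch S Gg).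
  rewrite /A cardsD (setIidPr TG) cardT ltn_pmul2l // mulSn.
  by move: S_gt0; set t := #|G :&: touch S|; set k := #|S|; lia.
have [M] : exists M : {set 'I_n * 'I_n},
    M \in [set M : {set 'I_n * 'I_n} | M \subset A & #|M| == (c * #|S|)%N].
  by apply/card_gt0P; rewrite cards_draws bin_gt0.
rewrite inE => /andP [MA /eqP cardM].
have MGt : M \subset G :&: touch S by apply: subset_trans MA (subsetDl _ _).
exists r, f, M; split => //.
- apply/pffun_onP; split.
    by apply/subsetP => v; rewrite inE; apply: contraR => /f_out ->; rewrite eqxx.
  by move=> _ /imageP [v vS ->]; have [] := f_in v vS.
- exact: subset_trans MGt (subsetIr _ _).
have TM : [disjoint T & M].
  by rewrite disjoint_sym disjoints_subset (subset_trans MA) // /A setDE subsetIr.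
rewrite subUset (subset_trans TG (subsetIl _ _)) (subset_trans MGt (subsetIl _ _)) /=.
by rewrite cardsU (disjoint_setI0 TM) cards0 subn0 cardT cardM.
Qed.

End DegreeSums.

Section UnionBound.
Variables (R : realType) (n c : nat).
Implicit Types (S : {set 'I_n}) (P : pred {set 'I_n}).

(* A witness (S, r, f, M) for a vertex set S: a root r, a parent map f of a
   spanning tree of S and a set M of c |S| edges touching S. *)
Definition witness := ((({set 'I_n} * 'I_n) * {ffun 'I_n -> 'I_n}) * {set 'I_n * 'I_n})%type.

Definition witness_set (i : witness) := i.1.1.1.

Definition witness_edges (i : witness) := tree_edges i.1.1.1 i.1.1.2 i.1.2 :|: i.2.

Definition good_root S (r : 'I_n) := r \in S.
Definition good_parent (Sr : {set 'I_n} * 'I_n) (f : {ffun 'I_n -> 'I_n}) :=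
  f \in pffun_on Sr.2 (Sr.1 :\ Sr.2) Sr.1.
Definition good_extra (Srf : ({set 'I_n} * 'I_n) * {ffun 'I_n -> 'I_n})
    (M : {set 'I_n * 'I_n}) :=
  (M \subset touch Srf.1.1) && (#|M| == c * #|Srf.1.1|)%N.

Definition good_witness P (i : witness) :=
  [&& P i.1.1.1, good_root i.1.1.1 i.1.1.2, good_parent i.1.1 i.1.2 & good_extra i.1 i.2].

(* |S| roots, |S| ^ (|S| - 1) parent maps and 'C(#|touch S|, c |S|) edge sets. *)
Lemma sum_good_witness P (F : {set 'I_n} -> R) :
  \sum_(i | good_witness P i) F (witness_set i) =
  \sum_(S | P S) F S * (#|S| * #|S| ^ #|S|.-1 * 'C(#|touch S|, c * #|S|))%:R.
Proof.
rewrite (eq_bigl (fun i : witness => [&& P i.1.1.1, good_root i.1.1.1 i.1.1.2 &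
    good_parent i.1.1 i.1.2] && good_extra i.1 i.2)).
  2: by move=> i; rewrite /good_witness !andbA.
rewrite -(pair_big_dep (fun j => [&& P j.1.1, good_root j.1.1 j.1.2 & good_parent j.1 j.2])
                       good_extra (fun j M => F j.1.1)) /=.
rewrite (eq_bigl (fun j : ({set 'I_n} * 'I_n) * {ffun 'I_n -> 'I_n} =>
    (P j.1.1 && good_root j.1.1 j.1.2) && good_parent j.1 j.2)); last by move=> j; rewrite !andbA.
rewrite -(pair_big_dep (fun j => P j.1 && good_root j.1 j.2) good_parent
            (fun j f => \sum_(M | good_extra (j, f) M) F j.1)) /=.
rewrite -(pair_big_dep P good_root (fun S r => \sum_(f | good_parent (S, r) f)
            \sum_(M | good_extra ((S, r), f) M) F S)) /=.
apply: eq_bigr => S _.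
have sum_extra r f : \sum_(M | good_extra (S, r, f) M) F S
                     = F S * ('C(#|touch S|, c * #|S|))%:R.
  rewrite (eq_bigl (fun M => M \in [set M : {set 'I_n * 'I_n} | (M \subset touch S) &
                                                            (#|M| == c * #|S|)%N])).
    by rewrite sumr_const cards_draws mulr_natr.
  by move=> M; rewrite inE.
have sum_parent r : r \in S ->
    \sum_(f | good_parent (S, r) f) \sum_(M | good_extra (S, r, f) M) F S
    = F S * ('C(#|touch S|, c * #|S|) * #|S| ^ #|S|.-1)%:R.
  move=> rS; under eq_bigr => f _ do rewrite sum_extra.
  rewrite (eq_bigl (fun f => f \in pffun_on r (S :\ r) S)) // sumr_const card_pffun_on.
  by rewrite [#|S :\ r|](_ : _ = #|S|.-1) ?natrM ?mulrA ?mulr_natr // [#|S|](cardsD1 r) rS.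
rewrite (eq_bigr _ sum_parent) (eq_bigl (fun r => r \in S)) // sumr_const -mulr_natr !natrM.
ring.
Qed.

Lemma card_touch S : (#|touch S| <= 2 * #|S| * n)%N.
Proof.
have touchX : touch S \subset setX S [set: 'I_n] :|: setX [set: 'I_n] S.
  apply/subsetP => -[a b]; rewrite /touch in_set => /andP[_ /orP[h|h]];
  by rewrite in_setU !in_setX h ?in_setT ?orbT.
apply: (leq_trans (subset_leq_card touchX)); apply: (leq_trans (leq_card_setU _ _)).
by rewrite !cardsX cardsT card_ord [(n * _)%N]mulnC addnn -mul2n mulnA.
Qed.

Lemma sum_sets_by_card (F : nat -> R) (Q : pred nat) :
  \sum_(S : {set 'I_n} | Q #|S|) F #|S| = \sum_(k < n.+1) (if Q k then F k else 0) *+ 'C(n, k).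
Proof.
rewrite big_mkcond /= (eq_bigl (fun S : {set 'I_n} => S \subset [set: 'I_n])); last first.
  by move=> S; rewrite subsetT.
by rewrite (sum_subsets_card [set: 'I_n] (fun k => if Q k then F k else 0)) cardsT card_ord.
Qed.

Definition large (S : {set 'I_n}) := ln (n%:R : R) <= #|S|%:R.

Definition degree_bounded (L : R) (G : {set 'I_n * 'I_n}) :=
  [forall S : {set 'I_n},
     induces_connected G S && large S ==> ((gdegsum G S)%:R <= L * #|S|%:R)].

Lemma Gnp_prob_not_degree_bounded (p : R) : 0 <= p -> p <= 1 ->
  Gnp_prob p (predC (degree_bounded (2 * c.+1)%:R)) <=
  \sum_(k < n.+1) (if ln (n%:R : R) <= k%:R
                   then p ^+ (k.-1 + c * k) * (k ^ k * 'C(2 * k * n, c * k))%:R else 0)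
                  *+ 'C(n, k).
Proof.
move=> p_ge0 p_le1.
pose P (i : witness) :=
  good_witness large i && (witness_edges i \subset gpairs n) &&
  (#|witness_edges i| == #|witness_set i|.-1 + c * #|witness_set i|)%N.
apply: le_trans (Gnp_prob_union_bound p_ge0 p_le1 (P := P) (W := witness_edges) _) _.
  move=> G Gg; rewrite /predC /degree_bounded /= negb_forall => /existsP [S].
  rewrite negb_imply => /andP [/andP [S_conn S_large] /negP unbounded].
  have heavy : (2 * (c.+1 * #|S|) < gdegsum G S)%N.
    by rewrite -(ltr_nat R) mulnA natrM ltNge; apply/negP.
  have [r [f [M [rS fP MT cardM /andP[WG cardW]]]]] := heavy_connected_witness Gg S_conn heavy.
  exists (((S, r), f), M) => //.
  by rewrite /P /good_witness /good_root /good_parent /good_extra /= S_large rS fP MT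
    cardM eqxx cardW (subset_trans WG Gg).
rewrite (eq_bigr (fun i => p ^+ (#|witness_set i|.-1 + c * #|witness_set i|))); last first.
  by move=> i /andP [/andP [_ Wg] /eqP cardW]; rewrite Gnp_prob_supset // cardW.
pose h k := p ^+ (k.-1 + c * k).
have h_ge0 k : 0 <= h k by rewrite exprn_ge0.
apply: (@le_trans _ _ (\sum_(i | good_witness large i) h #|witness_set i|)).
  rewrite [X in X <= _]big_mkcond [X in _ <= X]big_mkcond /=.
  apply: ler_sum => i _; rewrite /P.
  by case: (good_witness large i); rewrite ?andbF //=; case: ifP.
rewrite (sum_good_witness _ (fun S => h #|S|)).
rewrite -(sum_sets_by_card (fun k => h k * (k ^ k * 'C(2 * k * n, c * k))%:R)
                          (fun k => ln (n%:R : R) <= k%:R)).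
apply: ler_sum => S _; apply: ler_wpM2l => //; rewrite ler_nat leq_mul //.
  by case: #|S| => // k; rewrite expnS.
exact: leq_bin2l (card_touch S).
Qed.

End UnionBound.

Lemma ffact_leq_expn (N m : nat) : (N ^_ m <= N ^ m)%N.
Proof.
rewrite ffact_prod -[m in (_ <= _ ^ m)%N]card_ord -prod_nat_const.
by apply: leq_prod => i _; exact: leq_subr.
Qed.

Section BinomialEstimates.
Variable R : realType.
Local Notation e := (expR (1 : R)).

Lemma e_ge2 : 2 <= e.
Proof. by have := @expR_ge1Dx R 1. Qed.

Lemma expn_le_expR_fact (m : nat) : (m%:R : R) ^+ m <= e ^+ m * m`!%:R.
Proof.
case: m => [|m]; first by rewrite !expr0 mul1r.
have := @expR_ge1Dxn R m.+1%:R m (ler0n _ _).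
rewrite -expRM_natl mulr1 => taylor.
rewrite -ler_pdivrMr ?ltr0n ?fact_gt0 //; by apply: le_trans taylor; rewrite lerDr.
Qed.

Lemma bin_mul_expn_le (N m : nat) : 'C(N, m)%:R * (m%:R : R) ^+ m <= (N%:R * e) ^+ m.
Proof.
apply: (@le_trans _ _ ('C(N, m)%:R * (e ^+ m * m`!%:R))).
  by rewrite ler_wpM2l // expn_le_expR_fact.
rewrite mulrCA -natrM bin_ffact exprMn mulrC ler_wpM2r ?exprn_ge0 ?expR_ge0 //.
by rewrite -natrX ler_nat ffact_leq_expn.
Qed.

End BinomialEstimates.

Section TailEstimates.
Variable R : realType.
Local Notation e := (expR (1 : R)).

Definition tail_ratio (d : R) (c : nat) := e * d * (2 * e * d / c%:R) ^+ c.

Lemma union_term_le (d : R) (c n k : nat) : 1 <= d -> (0 < c)%N -> (0 < n)%N -> (0 < k)%N ->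
  (d / n%:R) ^+ (k.-1 + c * k) * (k ^ k * 'C(2 * k * n, c * k))%:R * 'C(n, k)%:R
   <= n%:R * tail_ratio d c ^+ k.
Proof.
move=> d_ge1 c_gt0 n_gt0; case: k => // k _ /=.
set nr : R := n%:R; set cr : R := c%:R; set m := (c * k.+1)%N; set y := 2 * e * d / cr.
have nr_gt0 : 0 < nr by rewrite ltr0n.
have cr_gt0 : 0 < cr by rewrite ltr0n.
have d_gt0 : 0 < d by apply: lt_le_trans d_ge1.
have e_gt0 : 0 < e by apply: expR_gt0.
have dn_ge0 : 0 <= d / nr by rewrite divr_ge0 // ltW.
have y_ge0 : 0 <= y by rewrite divr_ge0 ?mulr_ge0 ?ltW.
have -> : (d / nr) ^+ (k + m) * (k.+1 ^ k.+1 * 'C(2 * k.+1 * n, m))%:R * 'C(n, k.+1)%:R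
    = ((d / nr) ^+ k * ('C(n, k.+1) * k.+1 ^ k.+1)%:R) *
      ((d / nr) ^+ m * 'C(2 * k.+1 * n, m)%:R).
  by rewrite exprD !natrM; ring.
have roots : ('C(n, k.+1) * k.+1 ^ k.+1)%:R <= (nr * e) ^+ k.+1.
  by rewrite natrM natrX bin_mul_expn_le.
have extra : 'C(2 * k.+1 * n, m)%:R <= (2 * e * nr / cr) ^+ m.
  have m_gt0 : (0 : R) < m%:R by rewrite ltr0n muln_gt0 c_gt0.
  have := bin_mul_expn_le R (2 * k.+1 * n) m.
  have -> : (2 * k.+1 * n)%:R * e = m%:R * (2 * e * nr / cr).
    by rewrite /m /nr /cr !natrM; field; rewrite lt0r_neq0.
  by rewrite exprMn mulrC ler_pM2l // exprn_gt0.
apply: le_trans (_ : ((d / nr) ^+ k * (nr * e) ^+ k.+1) *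
                     ((d / nr) ^+ m * (2 * e * nr / cr) ^+ m) <= _).
  by apply: ler_pM; rewrite ?mulr_ge0 ?exprn_ge0 ?ler0n // ler_wpM2l ?exprn_ge0.
have -> : (d / nr) ^+ m * (2 * e * nr / cr) ^+ m = (y ^+ c) ^+ k.+1.
  by rewrite -exprMn -exprM /m /y; congr (_ ^+ _); field; rewrite !lt0r_neq0.
have -> : (d / nr) ^+ k * (nr * e) ^+ k.+1 = nr * e * (e * d) ^+ k.
  rewrite exprS mulrCA -exprMn [e * d]mulrC; congr (_ * (_ ^+ _)).
  by field; rewrite lt0r_neq0.
have -> : tail_ratio d c ^+ k.+1 = e * d * (e * d) ^+ k * (y ^+ c) ^+ k.+1.
  by rewrite /tail_ratio -/y exprMn exprS.
have ed_ge0 : 0 <= e * d by rewrite mulr_ge0 ?ltW.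
rewrite !mulrA ler_wpM2r ?exprn_ge0 // ler_wpM2r ?exprn_ge0 //.
by rewrite ler_peMr // mulr_ge0 ?ltW.
Qed.

Lemma exists_tail_ratio_small (d : R) : 1 <= d ->
  exists c : nat, (0 < c)%N /\ tail_ratio d c * e ^+ 3 <= 1.
Proof.
move=> d_ge1; set c := (Num.truncn (e ^+ 4 * d)).+1.
have c_gt : e ^+ 4 * d < c%:R := truncnS_gt _.
have e_ge2 := e_ge2 R; have e_gt0 : 0 < e by apply: expR_gt0.
have d_gt0 : 0 < d by apply: lt_le_trans d_ge1.
have e3_ge8 : 8 <= e ^+ 3.
  have : 2 ^+ 3 <= e ^+ 3 by rewrite lerXn2r // ?nnegrE ?ler0n ?ltW.
  by apply: le_trans; rewrite -natrX.
have C_gt0 : 0 < (c%:R : R) by rewrite ltr0n.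
exists c; split => //.
set C : R := c%:R; set y := 2 * e * d / C.
have y_ge0 : 0 <= y by rewrite divr_ge0 ?mulr_ge0 ?ltW.
have y_le_half : y <= 2^-1.
  rewrite /y ler_pdivrMr // ler_pdivlMl ?ltr0n //; apply: le_trans (ltW c_gt).
  have -> : e ^+ 4 * d = e ^+ 3 * (e * d) by rewrite exprS; ring.
  have -> : 2 * (2 * e * d) = 4 * (e * d) by ring.
  by rewrite ler_pM2r ?mulr_gt0 //; apply: le_trans e3_ge8; rewrite ler_nat.
have yc_le : y ^+ c <= C^-1.
  apply: (@le_trans _ _ (2^-1 ^+ c)); first by rewrite lerXn2r ?nnegrE ?invr_ge0 ?ler0n.
  rewrite exprVn lef_pV2 ?posrE ?exprn_gt0 // /C -natrX ler_nat.
  exact: ltnW (ltn_expl _ _).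
apply: (@le_trans _ _ (e * d * C^-1 * e ^+ 3)).
  by rewrite ler_pM2r ?exprn_gt0 // ler_pM2l // mulr_gt0.
have -> : e * d * C^-1 * e ^+ 3 = (e ^+ 4 * d) / C by rewrite exprS; ring.
by rewrite ler_pdivrMr // mul1r ltW.
Qed.

(* Since n <= e ^ k for large k, the factor e ^ 3 absorbs n ^ 3. *)
Lemma union_term_le_invn2 (d : R) (c n k : nat) : 1 <= d -> (0 < c)%N -> (1 < n)%N ->
  tail_ratio d c * e ^+ 3 <= 1 -> ln (n%:R : R) <= k%:R ->
  (d / n%:R) ^+ (k.-1 + c * k) * (k ^ k * 'C(2 * k * n, c * k))%:R * 'C(n, k)%:R
   <= (n%:R ^+ 2)^-1.
Proof.
move=> d_ge1 c_gt0 n_gt1 small ln_le_k.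
have n_gt0 : (0 < n)%N by apply: ltnW.
have nr_gt0 : (0 : R) < n%:R by rewrite ltr0n.
have k_gt0 : (0 < k)%N.
  by rewrite -(ltr0n R); apply: lt_le_trans ln_le_k; rewrite ln_gt0 // ltr1n.
apply: le_trans (union_term_le d_ge1 c_gt0 n_gt0 k_gt0) _.
set q := tail_ratio d c.
have q_ge0 : 0 <= q.
  by rewrite /q /tail_ratio !mulr_ge0 ?exprn_ge0 ?divr_ge0 ?mulr_ge0 ?ler0n
     ?expR_ge0 // (le_trans ler01 d_ge1).
have n_le_ek : (n%:R : R) <= e ^+ k.
  by rewrite -(lnK (x := n%:R)) ?posrE // -expRM_natl mulr1 ler_expR.
rewrite -[X in _ <= X]div1r ler_pdivlMr ?exprn_gt0 //.
have -> : n%:R * q ^+ k * n%:R ^+ 2 = q ^+ k * n%:R ^+ 3 by rewrite exprS; ring.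
apply: (@le_trans _ _ (q ^+ k * (e ^+ k) ^+ 3)).
  by rewrite ler_wpM2l ?exprn_ge0 // lerXn2r // nnegrE ?exprn_ge0 ?expR_ge0.
rewrite -exprM mulnC exprM -exprMn exprn_ile1 // mulr_ge0 ?exprn_ge0 ?expR_ge0 //.
Qed.

End TailEstimates.

Lemma sum_invn2_le (R : realType) (eps : R) (n : nat) : 0 < eps -> (0 < n)%N ->
  2 / eps < n%:R -> \sum_(k < n.+1) ((n%:R : R) ^+ 2)^-1 <= eps.
Proof.
move=> eps_gt0 n_gt0; rewrite ltr_pdivrMr // => n_large.
have n_ge1 : (1 : R) <= n%:R by rewrite ler1n.
rewrite sumr_const card_ord -[_ *+ n.+1]mulr_natl ler_pdivrMr ?exprn_gt0 ?ltr0n //.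
by rewrite -addn1 natrD; nra.
Qed.

Theorem lemma8 (R : realType) (d : R) (hd : 1 < d) :
  exists L : R, 0 < L /\
    forall eps : R, 0 < eps -> exists N : nat, forall n : nat, (N <= n)%N ->
      1 - eps <=
      Gnp_prob (d / n%:R)
        (fun G : {set 'I_n * 'I_n} =>
           [forall S : {set 'I_n},
              (induces_connected G S && (ln (n%:R : R) <= (#|S|)%:R)) ==>
              ((gdegsum G S)%:R <= L * (#|S|)%:R)]).
Proof.
have d_ge1 : 1 <= d := ltW hd.
have [c [c_gt0 small]] := exists_tail_ratio_small d_ge1.
exists (2 * c.+1)%:R; split; first by rewrite ltr0n.
move=> eps eps_gt0.
exists (maxn 2 (maxn (Num.truncn d).+1 (Num.truncn (2 / eps)).+1)) => n.
rewrite !geq_max => /and3P [n_gt1 d_lt_n eps_n].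
have nr_gt0 : (0 : R) < n%:R by rewrite ltr0n ltnW.
have p_ge0 : 0 <= d / n%:R by rewrite divr_ge0 // (le_trans ler01 d_ge1).
have p_le1 : d / n%:R <= 1.
  by rewrite ler_pdivrMr // mul1r ltW // (lt_le_trans (truncnS_gt d)) // ler_nat.
rewrite Gnp_probC lerD2l lerN2.
apply: le_trans (Gnp_prob_not_degree_bounded n c p_ge0 p_le1) _.
apply: le_trans (sum_invn2_le eps_gt0 (ltnW n_gt1) _); last first.
  by apply: lt_le_trans (truncnS_gt _) _; rewrite ler_nat.
apply: ler_sum => k _; case: ifP => [ln_le_k | _]; last by rewrite mul0rn invr_ge0 exprn_ge0 ?ltW.
by rewrite -mulr_natr union_term_le_invn2.
Qed.
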